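(* Let $K$ be a commutative field and $q\in K$. On $\mathcal{H}_{\mathcal{PP}}$ define the bilinear form $\langle-,-\rangle_q$ by, for plane posets $P,Q$, $$\langle P,Q\rangle_q=\begin{cases}q^{\phi(P,Q)}&\text{if }\iota(P)\leq Q,\\ 0&\text{otherwise,}\end{cases}$$ where, for $P,Q$ of the same cardinality, $$\phi(P,Q)=\sharp\{(x,y)\in P^2\mid x<_r y\text{ and }\theta_{P,Q}(x)<_h\theta_{P,Q}(y)\}+\sharp\{(x,y)\in P^2\mid x<_h y\text{ and }\theta_{P,Q}(x)<_r\theta_{P,Q}(y)\}$$ (with $q^0=1$). Then $\langle-,-\rangle_q$ is symmetric and is a Hopf pairing on $(\mathcal{H}_{\mathcal{PP}},m,\Delta_q)$, i.e. $\langle xy,z\rangle_q=\langle x\otimes y,\Delta_q(z)\rangle_q$ for all $x,y,z\in\mathcal{H}_{\mathcal{PP}}$ (where $\langle a\otimes b,c\otimes d\rangle_q=\langle a,c\rangle_q\langle b,d\rangle_q$). Moreover, it is nondegenerate if and only if $q\neq 0$.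
   Context: A plane poset is a finite set with two partial orders $\leq_h,\leq_r$ such that two distinct elements are $\leq_h$-comparable iff they are not $\leq_r$-comparable, considered up to isomorphism; $\mathcal{H}_{\mathcal{PP}}$ is the $K$-vector space with basis the isomorphism classes of plane posets, the empty one denoted $1$. On a plane poset, $x\leq y$ iff ($x\leq_h y$ or $x\leq_r y$) is a total order (known fact). For $P,Q$ of the same cardinality, $\theta_{P,Q}$ is the increasing bijection $P\to Q$, and $P\leq Q$ means: for all $x,y\in P$, $\theta_{P,Q}(x)\leq_h\theta_{P,Q}(y)$ in $Q$ implies $x\leq_h y$ in $P$ ($\leq$ only holds between posets of equal cardinality). $\iota(P)=(P,\leq_r,\leq_h)$. The product $m$: $PQ$ is the plane poset on $P\sqcup Q$ with $P,Q$ plane subposets, no $\leq_h$-comparability between $P$ and $Q$, and $x<_r y$ for $x\in P,y\in Q$, extended bilinearly. A biideal of $P$ is a subset $I$ with $x\in I$ and ($x\leq_h y$ or $x\leq_r y$) implying $y\in I$. The coproduct is $\Delta_q(P)=\sum_{I\text{ biideal of }P}q^{h(P\setminus I,I)}(P\setminus I)\otimes I$ with $h(A,B)=\sharp\{(x,y)\in A\times B\mid x<_h y\}$, $P\setminus I$ and $I$ carrying the restricted orders. *)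

From mathcomp Require Import all_boot all_order all_algebra.
Set Implicit Arguments. Unset Strict Implicit. Unset Printing Implicit Defensive.
Import GRing.Theory.
Local Open Scope ring_scope.

Record rawPP := RawPP {
  car : finType;
  leh : rel car;
  ler : rel car }.

Definition partial_order (T : finType) (le : rel T) : bool :=
  [forall x, le x x] &&
  [forall x, forall y, (le x y && le y x) ==> (x == y)] &&
  [forall x, forall y, forall z, (le x y && le y z) ==> le x z].

Definition plane_poset (P : rawPP) : Prop :=
  [/\ partial_order (@leh P), partial_order (@ler P) &
      forall x y : car P, x != y ->
        (leh x y || leh y x) = ~~ (ler x y || ler y x)].

Definition lth (P : rawPP) (x y : car P) := leh x y && (x != y).
Definition ltr (P : rawPP) (x y : car P) := ler x y && (x != y).

Definition pp_iota (P : rawPP) : rawPP := @RawPP (car P) (@ler P) (@leh P).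

(* strict total order x < y iff (x <=_h y or x <=_r y) and x <> y;
   rank x = number of elements strictly below x *)
Definition rank (P : rawPP) (x : car P) : nat :=
  #|[set y : car P | (leh y x || ler y x) && (y != x)]|.

(* theta_{P,Q}: the increasing bijection P -> Q (defined when #|P| = #|Q|):
   x is sent to the element of Q of the same rank. *)
Definition theta (P Q : rawPP) (x : car P) : option (car Q) :=
  [pick y : car Q | rank y == rank x].

Definition theta_rel (P Q : rawPP) (r : rel (car Q)) (x y : car P) : bool :=
  match @theta P Q x, @theta P Q y with
  | Some a, Some b => r a b
  | _, _ => false
  end.

Definition ppleq (P Q : rawPP) : bool :=
  (#|car P| == #|car Q|) &&
  [forall x : car P, forall y : car P,
     @theta_rel P Q (@leh Q) x y ==> leh x y].

Definition phi (P Q : rawPP) : nat :=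
  #|[set p : car P * car P | ltr p.1 p.2 && @theta_rel P Q (@lth Q) p.1 p.2]| +
  #|[set p : car P * car P | lth p.1 p.2 && @theta_rel P Q (@ltr Q) p.1 p.2]|.

Definition pairing (K : fieldType) (q : K) (P Q : rawPP) : K :=
  if ppleq (pp_iota P) Q then q ^+ phi P Q else 0.

Definition ppmul_h (P Q : rawPP) (a b : car P + car Q) : bool :=
  match a, b with
  | inl x, inl y => leh x y
  | inr x, inr y => leh x y
  | _, _ => false
  end.
Definition ppmul_r (P Q : rawPP) (a b : car P + car Q) : bool :=
  match a, b with
  | inl x, inl y => ler x y
  | inr x, inr y => ler x y
  | inl _, inr _ => true
  | inr _, inl _ => false
  end.
Definition ppmul (P Q : rawPP) : rawPP :=
  @RawPP (car P + car Q)%type (@ppmul_h P Q) (@ppmul_r P Q).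

Definition restrict (P : rawPP) (A : {set car P}) : rawPP :=
  @RawPP {x : car P | x \in A}
    (fun a b => leh (val a) (val b)) (fun a b => ler (val a) (val b)).

Definition biideal (P : rawPP) (I : {set car P}) : bool :=
  [forall x, forall y, ((x \in I) && (leh x y || ler x y)) ==> (y \in I)].

Definition hcount (P : rawPP) (A B : {set car P}) : nat :=
  #|[set p : car P * car P | [&& p.1 \in A, p.2 \in B & lth p.1 p.2]]|.

(* <x (x) y, Delta_q(R)>_q for basis elements x = P, y = Q *)
Definition pairing_coprod (K : fieldType) (q : K) (P Q R : rawPP) : K :=
  \sum_(I : {set car R} | biideal I)
     q ^+ hcount (~: I) I * (pairing q P (restrict (~: I)) * pairing q Q (restrict I)).

Definition pp_iso (P Q : rawPP) : Prop :=
  exists f : car P -> car Q, bijective f /\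
    forall x y, leh (f x) (f y) = leh x y /\ ler (f x) (f y) = ler x y.

Definition empty_pp : rawPP := @RawPP void (fun _ _ => false) (fun _ _ => false).

(* An element of H_PP, written as sum_i c_i [P_i] with the P_i plane posets
   in pairwise distinct isomorphism classes; it is nonzero iff some c_i != 0. *)
Definition vec_repr (K : fieldType) (s : seq (K * rawPP)) : Prop :=
  (forall i, (i < size s)%N -> plane_poset (nth (0, empty_pp) s i).2) /\
  (forall i j, (i < j < size s)%N ->
     ~ pp_iso (nth (0, empty_pp) s i).2 (nth (0, empty_pp) s j).2).

Definition vec_nonzero (K : fieldType) (s : seq (K * rawPP)) : Prop :=
  exists2 i, (i < size s)%N & (nth (0, empty_pp) s i).1 != 0.

Definition pp_nondegenerate (K : fieldType) (q : K) : Prop :=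
  (forall s : seq (K * rawPP), vec_repr s -> vec_nonzero s ->
     exists Q, plane_poset Q /\ \sum_(c <- s) c.1 * pairing q c.2 Q != 0) /\
  (forall s : seq (K * rawPP), vec_repr s -> vec_nonzero s ->
     exists P, plane_poset P /\ \sum_(c <- s) c.1 * pairing q P c.2 != 0).

(* On a plane poset, "x <_h y or x <_r y" is a strict total order, and for x < y exactly one
   of x <_h y, x <_r y holds; theta_{P,Q} is the unique rank-preserving bijection.
   Symmetry: iota(P) <= Q says that theta(x) <_h theta(y) forces x <_r y, which by the above
   is the same as x <_h y forcing theta(x) <_r theta(y), i.e. iota(Q) <= P; phi is symmetric by
   reindexing along theta.
   Hopf pairing: in PQ all of P lies below all of Q, so theta_{PQ,R} maps P onto the #|P|
   smallest elements of R, whose complement I is a biideal.  Biideals are upper sets of the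
   total order, hence determined by their cardinality, so I is the only biideal contributing to
   Delta_q(R); the order condition and phi split along R = (R \ I) + I, the cross term of phi
   being h(R \ I, I).
   Nondegeneracy: if <P, iota(Q)> != 0 then Q has at most as many <=_r-comparable pairs as P,
   with equality only when P and Q are isomorphic, while <P, iota(P)> = q^phi; so for q != 0
   the pairing is triangular with invertible diagonal.  For q = 0 the two-element h-chain pairs
   to zero with every plane poset: whenever iota of it is <= Q, its phi against Q is positive. *)

From mathcomp Require Import all_boot all_order all_algebra zify.
Set Implicit Arguments. Unset Strict Implicit. Unset Printing Implicit Defensive.
Import GRing.Theory.

Lemma partial_orderP (T : finType) (le : rel T) :
  reflect [/\ reflexive le, antisymmetric le & transitive le] (partial_order le).
Proof.
apply: (iffP idP) => [/andP[/andP[/forallP r /'forall_'forall_implyP a]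
                         /'forall_'forall_'forall_implyP t]|[r a t]].
  by split=> // [x y /a /eqP | y x z hxy hyz]; last exact: t (introT andP (conj hxy hyz)).
apply/andP; split; first (apply/andP; split); first exact/forallP.
  by apply/'forall_'forall_implyP => x y /a ->.
by apply/'forall_'forall_'forall_implyP => x y z /andP[/t]; apply.
Qed.

Definition pplt (P : rawPP) (x y : car P) := (leh x y || ler x y) && (x != y).

Section PlanePoset.
Variable P : rawPP.
Hypothesis hP : plane_poset P.
Implicit Types x y z : car P.

Lemma leh_refl : reflexive (@leh P).
Proof. by case: hP => /partial_orderP[]. Qed.
Lemma ler_refl : reflexive (@ler P).
Proof. by case: hP => _ /partial_orderP[]. Qed.
Lemma leh_anti : antisymmetric (@leh P).
Proof. by case: hP => /partial_orderP[]. Qed.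
Lemma ler_anti : antisymmetric (@ler P).
Proof. by case: hP => _ /partial_orderP[]. Qed.
Lemma leh_trans : transitive (@leh P).
Proof. by case: hP => /partial_orderP[]. Qed.
Lemma ler_trans : transitive (@ler P).
Proof. by case: hP => _ /partial_orderP[]. Qed.

Lemma plane_comparable x y : x != y -> (leh x y || leh y x) = ~~ (ler x y || ler y x).
Proof. by case: hP => _ _; apply. Qed.

Lemma leh_ler_eq x y : leh x y -> ler x y || ler y x -> x = y.
Proof.
move=> hxy rxy; apply/eqP/negPn/negP => /plane_comparable.
by rewrite hxy rxy.
Qed.

Lemma comparable_neq x y : x != y -> [|| leh x y, leh y x, ler x y | ler y x].
Proof. by move/plane_comparable; rewrite orbA; case: (_ || _) => //= /esym/negbFE. Qed.

Lemma pplt_neq x y : pplt x y -> x != y.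
Proof. by case/andP. Qed.

Lemma pplt_lehE x y : pplt x y -> leh x y = ~~ ler x y.
Proof.
case/andP=> hr nxy; apply/idP/idP => [h|/negbTE r]; last by rewrite r orbF in hr.
by apply: contra nxy => r; rewrite (leh_ler_eq h) ?r.
Qed.

Lemma lehE x y : x != y -> leh x y = pplt x y && ~~ ler x y.
Proof.
move=> nxy; case lt: (pplt x y); first exact: pplt_lehE.
by apply: contraFF lt => hxy; rewrite /pplt hxy nxy.
Qed.

Lemma pplt_asym x y : pplt x y -> pplt y x = false.
Proof.
case/andP=> /orP[a|a] nxy; apply/negbTE/negP => /andP[/orP[b|b] _];
  case/negP: nxy; apply/eqP.
- exact: leh_anti (introT andP (conj a b)).
- by apply: leh_ler_eq a _; rewrite b orbT.
- by apply/esym/(leh_ler_eq b); rewrite a orbT.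
- exact: ler_anti (introT andP (conj a b)).
Qed.

Lemma pplt_trans : transitive (@pplt P).
Proof.
move=> y x z lxy lyz.
have nxz : x != z by apply: contraTneq lyz => <-; rewrite pplt_asym.
rewrite /pplt nxz andbT.
have [nxy nyz] := (pplt_neq lxy, pplt_neq lyz).
case/andP: lxy => /orP[a|a] _; case/andP: lyz => /orP[b|b] _.
- by rewrite (leh_trans a b).
- case/or4P: (comparable_neq nxz) => [->//|c|->|c]; rewrite ?orbT //.
  + by case/negP: nyz; rewrite (leh_ler_eq (leh_trans c a)) // b orbT.
  + by case/negP: nxy; rewrite (leh_ler_eq a) // (ler_trans b c) orbT.
- case/or4P: (comparable_neq nxz) => [->//|c|->|c]; rewrite ?orbT //.
  + by case/negP: nxy; rewrite (leh_ler_eq (leh_trans b c)) // a orbT.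
  + by case/negP: nyz; rewrite (leh_ler_eq b) // (ler_trans c a) orbT.
- by rewrite (ler_trans a b) orbT.
Qed.

Lemma pplt_total x y : x != y -> pplt x y || pplt y x.
Proof.
move=> nxy; rewrite /pplt nxy eq_sym nxy !andbT.
by case/or4P: (comparable_neq nxy) => ->; rewrite ?orbT.
Qed.

Lemma rankE x : rank x = #|[set y | pplt y x]|.
Proof. by []. Qed.

Lemma rank_lt x y : pplt x y -> rank x < rank y.
Proof.
move=> lxy; rewrite !rankE; apply: proper_card; apply/properP; split.
  by apply/subsetP => z; rewrite !inE => /pplt_trans; apply.
by exists x; rewrite !inE // /pplt eqxx andbF.
Qed.

Lemma ltn_rank x y : (rank x < rank y) = pplt x y.
Proof.
apply/idP/idP => [lt|]; last exact: rank_lt.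
have nxy : x != y by apply: contraTneq lt => ->; rewrite ltnn.
case/orP: (pplt_total nxy) => // /rank_lt.
by rewrite ltnNge ltnW.
Qed.

Lemma rank_inj : injective (@rank P).
Proof.
move=> x y e; apply/eqP/negPn/negP => /pplt_total.
by rewrite -!ltn_rank e ltnn.
Qed.

Lemma rank_lt_card x : rank x < #|car P|.
Proof.
rewrite rankE -cardsT; apply: proper_card; apply/properP; split; first exact: subsetT.
by exists x; rewrite !inE // /pplt eqxx andbF.
Qed.

Definition rank_ord x : 'I_#|car P| := Ordinal (rank_lt_card x).

Lemma rank_ord_bij : bijective rank_ord.
Proof.
apply: inj_card_bij; last by rewrite card_ord.
by move=> x y /(congr1 val) /rank_inj.
Qed.

Lemma card_rank_lt n : n <= #|car P| -> #|[set x : car P | rank x < n]| = n.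
Proof.
move=> le; have -> : [set x : car P | rank x < n] = rank_ord @^-1: [set i : 'I__ | i < n].
  by apply/setP => x; rewrite !inE.
rewrite on_card_preimset; last exact: onW_bij rank_ord_bij.
by rewrite -sum1dep_card -(big_ord_widen _ (fun=> 1)) // sum1_card card_ord.
Qed.

End PlanePoset.

Lemma rank_iota (P : rawPP) (x : car P) : @rank (pp_iota P) x = rank x.
Proof. by apply: eq_card => y; rewrite !inE /= orbC. Qed.

Lemma theta_iotal (P Q : rawPP) (x : car P) : @theta (pp_iota P) Q x = theta Q x.
Proof. by rewrite /theta rank_iota. Qed.

Lemma theta_iotar (P Q : rawPP) (x : car P) : @theta P (pp_iota Q) x = theta Q x.
Proof. by apply: eq_pick => y; rewrite rank_iota. Qed.

Lemma plane_iota (P : rawPP) : plane_poset P -> plane_poset (pp_iota P).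
Proof. by case=> h r ax; split=> // x y /ax /= ->; rewrite negbK. Qed.

Lemma plane_restrict (P : rawPP) (A : {set car P}) :
  plane_poset P -> plane_poset (restrict A).
Proof.
move=> hP; split; apply/partial_orderP || move=> x y nxy.
- split=> [x|x y /(leh_anti hP)/val_inj|y x z]; [exact: (leh_refl hP)|by []|exact: (leh_trans hP)].
- split=> [x|x y /(ler_anti hP)/val_inj|y x z]; [exact: (ler_refl hP)|by []|exact: (ler_trans hP)].
- exact: (plane_comparable hP).
Qed.

Lemma card_restrict (P : rawPP) (A : {set car P}) : #|car (restrict A)| = #|A|.
Proof. exact: card_sig. Qed.

Lemma theta_rank (P Q : rawPP) (x : car P) (y : car Q) :
  plane_poset Q -> rank y = rank x -> theta Q x = Some y.
Proof.
move=> hQ e; rewrite /theta; case: pickP => [z /eqP ez|/(_ y)]; last by rewrite e eqxx.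
by congr Some; apply: (rank_inj hQ); rewrite ez e.
Qed.

Lemma exists_rank_preserving (P Q : rawPP) : plane_poset P -> plane_poset Q ->
  #|car P| = #|car Q| -> exists f : car P -> car Q, forall x, rank (f x) = rank x.
Proof.
move=> hP hQ e; have [h _ hK] := rank_ord_bij hQ.
exists (fun x => h (cast_ord e (rank_ord x))) => x.
by rewrite [LHS](congr1 val (hK _)).
Qed.

Lemma rank_preserving_bij (P Q : rawPP) (f : car P -> car Q) : plane_poset P ->
  #|car P| = #|car Q| -> (forall x, rank (f x) = rank x) -> bijective f.
Proof.
move=> hP e rank_f; apply: inj_card_bij; last by rewrite e.
by move=> x y /(congr1 (@rank Q)); rewrite !rank_f => /(rank_inj hP).
Qed.

Lemma theta_relE (P Q : rawPP) (f : car P -> car Q) (r : rel (car Q)) x y :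
  (forall x, theta Q x = Some (f x)) -> theta_rel r x y = r (f x) (f y).
Proof. by move=> th; rewrite /theta_rel !th. Qed.

Lemma ppleqP (P Q : rawPP) (f : car P -> car Q) :
  #|car P| = #|car Q| -> (forall x, theta Q x = Some (f x)) ->
  reflect (forall x y, leh (f x) (f y) -> leh x y) (ppleq P Q).
Proof.
move=> e th; rewrite /ppleq e eqxx /=.
apply: (iffP 'forall_'forall_implyP) => H x y; last by rewrite (theta_relE _ _ _ th); apply: H.
by move: (H x y); rewrite (theta_relE _ _ _ th).
Qed.

Lemma card_pairs_bij (T U : finType) (h : T -> U) (F : rel U) : bijective h ->
  #|[set p : T * T | F (h p.1) (h p.2)]| = #|[set p : U * U | F p.1 p.2]|.
Proof.
case=> k hK kK; pose hh (p : T * T) := (h p.1, h p.2).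
have hh_bij : bijective hh by exists (fun p => (k p.1, k p.2)) => -[a b]; rewrite /hh /= ?hK ?kK.
rewrite -(on_card_preimset (onW_bij _ hh_bij)).
by apply: eq_card => p; rewrite !inE.
Qed.

Section RankPreserving.
Variables P Q : rawPP.
Hypotheses (hP : plane_poset P) (hQ : plane_poset Q).
Variables (f : car P -> car Q) (g : car Q -> car P).
Hypotheses (fK : cancel f g) (gK : cancel g f) (rank_f : forall x, rank (f x) = rank x).

Lemma rank_g y : rank (g y) = rank y.
Proof. by rewrite -{2}(gK y) rank_f. Qed.

Lemma theta_f x : theta Q x = Some (f x).
Proof. exact: theta_rank. Qed.

Lemma pplt_f x y : pplt (f x) (f y) = pplt x y.
Proof. by rewrite -(ltn_rank hP) -(ltn_rank hQ) !rank_f. Qed.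

Lemma ppleq_iotaP : reflect (forall x y, leh (f x) (f y) -> ler x y) (ppleq (pp_iota P) Q).
Proof.
apply: (@ppleqP (pp_iota P) Q f) => [|x]; first exact: (bij_eq_card (Bijective fK gK)).
by rewrite theta_iotal theta_f.
Qed.

Lemma ppleq_iota_transpose :
  (forall x y, leh (f x) (f y) -> ler x y) -> forall x y, leh x y -> ler (f x) (f y).
Proof.
move=> H x y hxy; have [<-|nxy] := eqVneq x y; first exact: ler_refl.
have lt : pplt (f x) (f y) by rewrite pplt_f /pplt hxy nxy.
rewrite -[ler _ _]negbK -(pplt_lehE hQ lt); apply/negP => /H rxy.
by case/negP: nxy; rewrite (leh_ler_eq hP hxy) ?rxy.
Qed.

Lemma phiE : phi P Q =
  #|[set p : car P * car P | ltr p.1 p.2 && lth (f p.1) (f p.2)]| +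
  #|[set p : car P * car P | lth p.1 p.2 && ltr (f p.1) (f p.2)]|.
Proof. by congr addn; apply: eq_card => p; rewrite !inE (theta_relE _ _ _ theta_f). Qed.

End RankPreserving.

Lemma ppleq_iota_sym (P Q : rawPP) : plane_poset P -> plane_poset Q ->
  ppleq (pp_iota P) Q = ppleq (pp_iota Q) P.
Proof.
move=> hP hQ; have [e|ne] := eqVneq #|car P| #|car Q|; last first.
  by rewrite /ppleq /= (negbTE ne) eq_sym (negbTE ne).
have [f rank_f] := exists_rank_preserving hP hQ e.
have [g fK gK] := rank_preserving_bij hP e rank_f.
have rank_g := rank_g gK rank_f.
apply/(ppleq_iotaP hQ fK gK rank_f)/(ppleq_iotaP hP gK fK rank_g) => H.
- by move=> a b /(ppleq_iota_transpose hP hQ rank_f H); rewrite !gK.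
- by move=> x y /(ppleq_iota_transpose hQ hP rank_g H); rewrite !fK.
Qed.

Lemma phi_sym (P Q : rawPP) : plane_poset P -> plane_poset Q ->
  #|car P| = #|car Q| -> phi P Q = phi Q P.
Proof.
move=> hP hQ e; have [f rank_f] := exists_rank_preserving hP hQ e.
have [g fK gK] := rank_preserving_bij hP e rank_f.
rewrite (phiE hQ rank_f) (phiE hP (rank_g gK rank_f)) addnC.
have bij_f := Bijective fK gK.
congr addn.
- rewrite -(card_pairs_bij (fun a b => ltr a b && lth (g a) (g b)) bij_f).
  by apply: eq_card => p; rewrite !inE !fK andbC.
- rewrite -(card_pairs_bij (fun a b => lth a b && ltr (g a) (g b)) bij_f).
  by apply: eq_card => p; rewrite !inE !fK andbC.
Qed.

Lemma rank_inl (P Q : rawPP) (x : car P) : @rank (ppmul P Q) (inl x) = rank x.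
Proof.
rewrite !rankE -!sum1dep_card big_sumType /=.
rewrite (@big_pred0 _ _ _ _ _ (fun y => @pplt (ppmul P Q) (inr y) (inl x))) //.
by rewrite addn0; apply: eq_bigl.
Qed.

Lemma rank_inr (P Q : rawPP) (y : car Q) : @rank (ppmul P Q) (inr y) = #|car P| + rank y.
Proof. by rewrite !rankE -!sum1dep_card big_sumType -sum1_card; congr addn; apply: eq_bigl. Qed.

Lemma rank_restrict (P : rawPP) (A : {set car P}) (a : car (restrict A)) :
  rank a = #|[set y in A | pplt y (val a)]|.
Proof.
rewrite rankE -[LHS](card_imset _ val_inj); apply: eq_card => y; rewrite !inE.
apply/imsetP/andP => [[b]|[yA lt]]; first by rewrite inE => lt ->; split; [exact: valP|].
by exists (Sub y yA); rewrite ?inE ?SubK.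
Qed.

Lemma biidealP (P : rawPP) (I : {set car P}) :
  reflect (forall x y, x \in I -> leh x y || ler x y -> y \in I) (biideal I).
Proof.
by apply: (iffP 'forall_'forall_implyP) => H x y => [xI /(conj xI)/andP|/andP[]]; apply: H.
Qed.

Section TopSegment.
Variable R : rawPP.
Hypothesis hR : plane_poset R.

Lemma biideal_pplt (I : {set car R}) x y : biideal I -> x \in I -> pplt x y -> y \in I.
Proof. by move=> /biidealP bI xI /andP[/(bI x y xI)]. Qed.

Lemma biideal_total (I J : {set car R}) : biideal I -> biideal J -> (I \subset J) || (J \subset I).
Proof.
move=> bI bJ; case: (boolP (I \subset J)) => //= /subsetPn[x xI xJ].
apply/subsetP => y yJ; have nxy : x != y by apply: contraNneq xJ => ->.
case/orP: (pplt_total hR nxy) => [/(biideal_pplt bI xI) //|/(biideal_pplt bJ yJ)].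
by rewrite (negbTE xJ).
Qed.

Lemma biideal_card_inj (I J : {set car R}) :
  biideal I -> biideal J -> #|I| = #|J| -> I = J.
Proof.
move=> bI bJ e; apply/eqP; case/orP: (biideal_total bI bJ) => sub.
  by rewrite eqEcard sub e leqnn.
by rewrite eq_sym eqEcard sub e leqnn.
Qed.

Variables (n : nat) (hn : n <= #|car R|).

Definition top_segment : {set car R} := [set y | n <= rank y].

Lemma biideal_top_segment : biideal top_segment.
Proof.
apply/biidealP => x y; rewrite !inE => le_nx hxy.
have [<-|nxy] := eqVneq x y; first exact: le_nx.
by rewrite (leq_trans le_nx) // ltnW // (ltn_rank hR) /pplt hxy.
Qed.

Lemma card_top_segmentC : #|~: top_segment| = n.
Proof.
rewrite -(card_rank_lt hR hn); apply: eq_card => y.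
by rewrite !inE -ltnNge.
Qed.

Lemma card_top_segment : #|top_segment| = #|car R| - n.
Proof. by rewrite -card_top_segmentC -(cardsC top_segment) addnK. Qed.

Lemma rank_bottom (a : car (restrict (~: top_segment))) : rank a = rank (val a).
Proof.
rewrite rank_restrict rankE; apply: eq_card => y; rewrite !inE andb_idl //.
have := valP a; rewrite !inE -!ltnNge => lt_an /(rank_lt hR) lt_ya.
exact: ltn_trans lt_ya lt_an.
Qed.

Lemma rank_top (b : car (restrict top_segment)) : rank (val b) = n + rank b.
Proof.
rewrite rank_restrict rankE -(cardsID top_segment) -card_top_segmentC addnC.
congr addn; apply: eq_card => y; rewrite !inE; last exact: andbC.
apply/andb_idr; rewrite -ltnNge => lt_yn; have := valP b; rewrite inE => le_nb.
by rewrite -(ltn_rank hR) (leq_trans lt_yn).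
Qed.

End TopSegment.

Lemma card_pairs (T U : finType) (F : pred (T * U)) :
  #|[set p | F p]| = \sum_x \sum_y F (x, y).
Proof.
rewrite -sum1dep_card (eq_bigl (fun p : T * U => xpredT p.1 && F (p.1, p.2))); last by case.
rewrite -(pair_big_dep xpredT (fun x y => F (x, y)) (fun _ _ => 1)).
by apply: eq_bigr => x _; rewrite big_mkcond; apply: eq_bigr => y _; case: (F (x, y)).
Qed.

Lemma sum_pairs_sumType (T U : finType) (F : T + U -> T + U -> nat) :
  \sum_u \sum_v F u v =
    \sum_x \sum_x' F (inl x) (inl x') + \sum_x \sum_y F (inl x) (inr y) +
    \sum_y \sum_x F (inr y) (inl x) + \sum_y \sum_y' F (inr y) (inr y').
Proof.
rewrite big_sumType /= (eq_bigr _ (fun x _ => big_sumType _ _ (F (inl x)))).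
rewrite [in X in _ + X](eq_bigr _ (fun y _ => big_sumType _ _ (F (inr y)))).
by rewrite !big_split /= !addnA.
Qed.

Section ProductSplitting.
Variables P Q R : rawPP.
Hypotheses (hP : plane_poset P) (hQ : plane_poset Q) (hR : plane_poset R).
Hypothesis card_R : #|car R| = #|car P| + #|car Q|.

Let hn : #|car P| <= #|car R|. Proof. by rewrite card_R leq_addr. Qed.

Local Notation S := (top_segment R #|car P|).
Local Notation A := (restrict (~: S)).
Local Notation B := (restrict S).

Let hA : plane_poset A. Proof. exact: plane_restrict. Qed.
Let hB : plane_poset B. Proof. exact: plane_restrict. Qed.

Let cA : #|car P| = #|car A|.
Proof. by rewrite card_restrict card_top_segmentC. Qed.
Let cB : #|car Q| = #|car B|.
Proof. by rewrite card_restrict card_top_segment // card_R addKn. Qed.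

Section Glue.
Variables (fP : car P -> car A) (fQ : car Q -> car B).
Hypotheses (rank_fP : forall x, rank (fP x) = rank x) (rank_fQ : forall y, rank (fQ y) = rank y).

Definition glue (u : car P + car Q) : car R :=
  match u with inl x => val (fP x) | inr y => val (fQ y) end.

Lemma rank_glue u : rank (glue u) = @rank (ppmul P Q) u.
Proof.
case: u => [x|y] /=; first by rewrite rank_inl -rank_fP (rank_bottom hR).
by rewrite rank_inr (rank_top hR hn) rank_fQ.
Qed.

Lemma theta_glue u : @theta (pp_iota (ppmul P Q)) R u = Some (glue u).
Proof. by rewrite theta_iotal; apply/theta_rank/rank_glue. Qed.

Lemma ppleq_iota_ppmul :
  ppleq (pp_iota (ppmul P Q)) R = ppleq (pp_iota P) A && ppleq (pp_iota Q) B.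
Proof.
have thA x : @theta (pp_iota P) A x = Some (fP x) by rewrite theta_iotal; apply: theta_rank.
have thB y : @theta (pp_iota Q) B y = Some (fQ y) by rewrite theta_iotal; apply: theta_rank.
have cPQ : #|car (pp_iota (ppmul P Q))| = #|car R| by rewrite card_sum card_R.
have leA := @ppleqP (pp_iota P) A fP cA thA.
have leB := @ppleqP (pp_iota Q) B fQ cB thB.
apply/(ppleqP cPQ theta_glue)/andP => [H|[/leA HP /leB HQ]].
  split; first by apply/leA => x y; apply: (H (inl x) (inl y)).
  by apply/leB => x y; apply: (H (inr x) (inr y)).
case=> [x|y] [x'|y'] //=; [exact: HP| |exact: HQ].
move=> hyx; have /biidealP bS := biideal_top_segment hR #|car P|.
by have := valP (fP x'); rewrite in_setC (bS _ _ (valP (fQ y))) ?hyx.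
Qed.

Lemma hcount_glue :
  hcount (~: S) S = \sum_x \sum_y lth (glue (inl x)) (glue (inr y)).
Proof.
rewrite /hcount card_pairs.
transitivity (\sum_(a in ~: S) \sum_(b in S) (lth a b : nat)).
  rewrite [RHS]big_mkcond; apply: eq_bigr => a _; rewrite [in RHS]big_mkcond /= in_setC.
  by case: (a \in S) => /=; [rewrite big1|apply: eq_bigr => b _; case: (b \in S)].
rewrite big_sub (reindex fP) /=; last exact/onW_bij/(rank_preserving_bij hP cA rank_fP).
apply: eq_bigr => x _; rewrite big_sub (reindex fQ) //.
exact/onW_bij/(rank_preserving_bij hQ cB rank_fQ).
Qed.

Lemma phi_ppmul : phi (ppmul P Q) R = phi P A + phi Q B + hcount (~: S) S.
Proof.
rewrite (@phiE (ppmul P Q) R hR glue rank_glue) (phiE hA rank_fP) (phiE hB rank_fQ).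
rewrite !card_pairs !sum_pairs_sumType /= hcount_glue !big1_eq !addn0.
have regroup (a x b c d : nat) : a + x + b + (c + d) = a + c + (b + d) + x by lia.
by rewrite regroup.
Qed.

End Glue.

Local Open Scope ring_scope.

Lemma pairing_ppmul (K : fieldType) (q : K) :
  pairing q (ppmul P Q) R = q ^+ hcount (~: S) S * (pairing q P A * pairing q Q B).
Proof.
have [fP rank_fP] := exists_rank_preserving hP hA cA.
have [fQ rank_fQ] := exists_rank_preserving hQ hB cB.
rewrite /pairing (ppleq_iota_ppmul rank_fP rank_fQ) (phi_ppmul rank_fP rank_fQ).
case: ppleq; case: ppleq; rewrite /= ?(mulr0, mul0r) //.
by rewrite -!exprD addnC.
Qed.

End ProductSplitting.

Lemma pp_iso_sym (P Q : rawPP) : pp_iso P Q -> pp_iso Q P.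
Proof.
case=> f [[g fK gK] Hf]; exists g; split; first by exists f.
by move=> a b; rewrite -(Hf (g a) (g b)).1 -(Hf (g a) (g b)).2 !gK.
Qed.

Definition card_ler (P : rawPP) := #|[set p : car P * car P | ler p.1 p.2]|.

Section IotaComparison.
Variables P Q : rawPP.
Hypotheses (hP : plane_poset P) (hQ : plane_poset Q).
Variables (f : car P -> car Q) (g : car Q -> car P).
Hypotheses (fK : cancel f g) (gK : cancel g f) (rank_f : forall x, rank (f x) = rank x).
Hypothesis ler_f : forall x y, ler (f x) (f y) -> ler x y.

Lemma card_ler_le : card_ler Q <= card_ler P.
Proof.
rewrite /card_ler -(card_pairs_bij (@ler Q) (Bijective fK gK)).
by apply/subset_leq_card/subsetP => -[x y]; rewrite !inE; apply: ler_f.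
Qed.

Lemma iso_of_card_ler_eq : card_ler Q = card_ler P -> pp_iso P Q.
Proof.
rewrite /card_ler -(card_pairs_bij (@ler Q) (Bijective fK gK)) => e.
have sub : [set p | ler (f p.1) (f p.2)] \subset [set p : car P * car P | ler p.1 p.2].
  by apply/subsetP => -[x y]; rewrite !inE; apply: ler_f.
have {sub e}/setP eq_ler : [set p | ler (f p.1) (f p.2)] = [set p | ler p.1 p.2].
  by apply/eqP; rewrite eqEcard sub e leqnn.
have ler_fE x y : ler (f x) (f y) = ler x y by have := eq_ler (x, y); rewrite !inE.
exists f; split=> [|x y]; first by exists g.
split=> //; have [<-|nxy] := eqVneq x y; first by rewrite !leh_refl.
have nfxy : f x != f y by rewrite (inj_eq (can_inj fK)).
by rewrite (lehE hP nxy) (lehE hQ nfxy) (pplt_f hP hQ rank_f) ler_fE.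
Qed.

End IotaComparison.

Lemma ppleq_iota_card_ler (P Q : rawPP) : plane_poset P -> plane_poset Q ->
  ppleq (pp_iota P) (pp_iota Q) ->
  card_ler Q <= card_ler P /\ (card_ler Q = card_ler P -> pp_iso P Q).
Proof.
move=> hP hQ le_PQ; have /eqP e : #|car P| == #|car Q| by case/andP: le_PQ.
have [f rank_f] := exists_rank_preserving hP hQ e.
have [g fK gK] := rank_preserving_bij hP e rank_f.
have th x : @theta (pp_iota P) (pp_iota Q) x = Some (f x).
  by rewrite theta_iotal theta_iotar (theta_f hQ rank_f).
have ler_f := elimT (@ppleqP (pp_iota P) (pp_iota Q) f e th) le_PQ.
by split; [exact: card_ler_le | exact: iso_of_card_ler_eq].
Qed.

Definition hchain2 : rawPP := @RawPP bool implb eq_op.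

Lemma plane_hchain2 : plane_poset hchain2.
Proof. by split; [apply/partial_orderP; split; do ?case..|move=> [] []]. Qed.

Lemma phi_hchain2_gt0 (Q : rawPP) : plane_poset Q ->
  ppleq (pp_iota hchain2) Q -> 0 < phi hchain2 Q.
Proof.
move=> hQ le_Q; have /eqP e : #|car hchain2| == #|car Q| by case/andP: le_Q.
have [f rank_f] := exists_rank_preserving plane_hchain2 hQ e.
have th x : @theta (pp_iota hchain2) Q x = Some (f x).
  by rewrite theta_iotal (theta_f hQ rank_f).
have /(_ false true)/contra/(_ isT) nh := elimT (@ppleqP (pp_iota hchain2) Q f e th) le_Q.
have lt : pplt (f false) (f true) by rewrite (pplt_f plane_hchain2 hQ rank_f).
rewrite (phiE hQ rank_f) addn_gt0; apply/orP; right; rewrite card_gt0.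
apply/set0Pn; exists (false, true); rewrite !inE /= /ltr (pplt_neq lt) andbT.
by rewrite -[ler _ _]negbK -(pplt_lehE hQ lt).
Qed.

Local Open Scope ring_scope.

Section Pairing.
Variables (K : fieldType) (q : K).

Lemma pairing_card (P Q : rawPP) : pairing q P Q != 0 -> #|car P| = #|car Q|.
Proof. by rewrite /pairing; case/boolP: (ppleq _ _) => [/andP[/eqP] | _]; rewrite ?eqxx. Qed.

Lemma pairing_sym (P Q : rawPP) : plane_poset P -> plane_poset Q ->
  pairing q P Q = pairing q Q P.
Proof.
move=> hP hQ; rewrite /pairing (ppleq_iota_sym hP hQ).
case le_QP: (ppleq (pp_iota Q) P) => //; case/andP: le_QP => /eqP e _.
by rewrite (phi_sym hP hQ (esym e)).
Qed.

Lemma pairing_coprod_top_segment (P Q R : rawPP) : plane_poset R ->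
  #|car R| = (#|car P| + #|car Q|)%N ->
  let S := top_segment R #|car P| in
  pairing_coprod q P Q R =
    q ^+ hcount (~: S) S * (pairing q P (restrict (~: S)) * pairing q Q (restrict S)).
Proof.
move=> hR card_R S; have hn : (#|car P| <= #|car R|)%N by rewrite card_R leq_addr.
rewrite /pairing_coprod (bigD1 S) /=; last exact: biideal_top_segment.
rewrite big1 ?addr0 // => I /andP[bI nIS].
have [->|nz] := eqVneq (pairing q Q (restrict I)) 0; first by rewrite !mulr0.
case/eqP: nIS; apply: (biideal_card_inj hR bI (biideal_top_segment hR #|car P|)).
by rewrite card_top_segment // card_R addKn -card_restrict -(pairing_card nz).
Qed.

Lemma pairing_ppmul_coprod (P Q R : rawPP) :
  plane_poset P -> plane_poset Q -> plane_poset R ->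
  pairing q (ppmul P Q) R = pairing_coprod q P Q R.
Proof.
move=> hP hQ hR; have [card_R|card_R] := eqVneq #|car R| (#|car P| + #|car Q|)%N.
  by rewrite pairing_ppmul // pairing_coprod_top_segment.
rewrite /pairing_coprod big1 => [|I _].
  have [//|/pairing_card] := eqVneq (pairing q (ppmul P Q) R) 0.
  by rewrite card_sum => e; rewrite e eqxx in card_R.
have [->|/pairing_card cP] := eqVneq (pairing q P (restrict (~: I))) 0.
  by rewrite !(mulr0, mul0r).
have [->|/pairing_card cQ] := eqVneq (pairing q Q (restrict I)) 0; first by rewrite !mulr0.
by rewrite cP cQ !card_restrict addnC cardsC eqxx in card_R.
Qed.

Lemma pairing_iota_diag (P : rawPP) : plane_poset P ->
  pairing q P (pp_iota P) = q ^+ phi P (pp_iota P).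
Proof.
move=> hP; rewrite /pairing; suff -> : ppleq (pp_iota P) (pp_iota P) by [].
apply/(@ppleqP (pp_iota P) (pp_iota P) id) => // x.
by rewrite theta_iotal (theta_rank (plane_iota hP) (@rank_iota P x)).
Qed.

Lemma pairing_sum_nonzero (s : seq (K * rawPP)) : q != 0 ->
  vec_repr s -> vec_nonzero s ->
  exists2 Q, plane_poset Q & \sum_(c <- s) c.1 * pairing q c.2 Q != 0.
Proof.
move=> hq [plane_s distinct_s] [i0 lt_i0 nz_i0]; pose x0 := (0 : K, empty_pp).
have [j nz_j max_j] := @arg_maxnP _ (Ordinal lt_i0) (fun i : 'I_(size s) => (nth x0 s i).1 != 0)
  (fun i => card_ler (nth x0 s i).2) nz_i0.
have hj := plane_s j (ltn_ord j).
exists (pp_iota (nth x0 s j).2); first exact: plane_iota.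
rewrite (big_nth x0) big_mkord (bigD1 j) //= big1 ?addr0.
  by rewrite pairing_iota_diag // mulf_neq0 // expf_neq0.
move=> i nij; have [->|nz_i] := eqVneq (nth x0 s i).1 0; first by rewrite mul0r.
rewrite /pairing; case le_ij: ppleq; last by rewrite mulr0.
have [le_ji iso_ij] := ppleq_iota_card_ler (plane_s i (ltn_ord i)) hj le_ij.
have {iso_ij} iso_ij := iso_ij (anti_leq (introT andP (conj le_ji (max_j i nz_i)))).
case: (ltngtP i j) => [lt_ij|lt_ji|/val_inj eq_ij]; last by rewrite eq_ij eqxx in nij.
  by case: (distinct_s i j); rewrite ?lt_ij ?ltn_ord.
by case: (distinct_s j i); rewrite ?lt_ji ?ltn_ord //; apply: pp_iso_sym.
Qed.

End Pairing.

Lemma pairing0_hchain2 (K : fieldType) (Q : rawPP) : plane_poset Q ->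
  pairing (0 : K) hchain2 Q = 0.
Proof.
move=> hQ; rewrite /pairing; case le_Q: ppleq => //.
by rewrite expr0n eqn0Ngt (phi_hchain2_gt0 hQ le_Q).
Qed.

Lemma pp_nondegenerateP (K : fieldType) (q : K) : pp_nondegenerate q <-> q != 0.
Proof.
split=> [[nondeg _]|hq].
  have s_repr : vec_repr [:: (1 : K, hchain2)].
    by split=> [[|i] //= _|i j /= lt]; [exact: plane_hchain2|lia].
  have s_nz : vec_nonzero [:: (1 : K, hchain2)] by exists 0%N => //; exact: oner_neq0.
  apply/eqP => q0; have [Q [hQ]] := nondeg _ s_repr s_nz.
  by rewrite big_seq1 q0 pairing0_hchain2 // mulr0 eqxx.
split=> s s_repr s_nz; have [Q hQ sum_nz] := pairing_sum_nonzero hq s_repr s_nz.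
  by exists Q.
exists Q; split=> //; case: s_repr => plane_s _; pose x0 := (0 : K, empty_pp).
rewrite (big_nth x0) big_mkord; rewrite (big_nth x0) big_mkord in sum_nz.
rewrite (eq_bigr (fun i : 'I_(size s) => (nth x0 s i).1 * pairing q (nth x0 s i).2 Q)) // => i _.
by rewrite pairing_sym //; apply: plane_s.
Qed.

Theorem theorem23 (K : fieldType) (q : K) :
  (forall P Q : rawPP, plane_poset P -> plane_poset Q ->
     pairing q P Q = pairing q Q P) /\
  (forall P Q R : rawPP, plane_poset P -> plane_poset Q -> plane_poset R ->
     pairing q (ppmul P Q) R = pairing_coprod q P Q R) /\
  (pp_nondegenerate q <-> q != 0).
Proof.
split; first exact: pairing_sym.
split; first exact: pairing_ppmul_coprod.
exact: pp_nondegenerateP.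
Qed.
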